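(* Let $\Phi(\vec x)=\bigwedge_{i=1}^m f_i\mid g_i$ be a system of divisibility constraints in $d$ variables and let $p$ be a prime with $p\notin\mathbb P(\Phi)$. Then $\Phi$ has a solution $\vec b\in\mathbb N^d$ modulo $p$ such that $v_p(f_i(\vec b))=0$ for every $1\le i\le m$ and $\|\vec b\|_\infty\le p-1$.
   Context: Linear polynomials $f=a_1x_1+\dots+a_dx_d+c$ have integer coefficients. A system of divisibility constraints is $\Phi(\vec x)=\bigwedge_{i=1}^m f_i(\vec x)\mid g_i(\vec x)$ with $m\ge1$ and linear polynomials $f_i\neq 0$, $g_i$. For a prime $p$, $v_p$ is the $p$-adic valuation ($v_p(0)=\infty$); $\vec b\in\mathbb Z^d$ is a solution of $\Phi$ modulo $p$ if $f_i(\vec b)\ne0$ and $v_p(f_i(\vec b))\le v_p(g_i(\vec b))$ for all $i$. $\mathbb P(\Phi)$ is the set of primes $p$ with $p\le m$ or $p$ dividing some coefficient or constant of some left-hand side $f_i$. $\|\vec b\|_\infty$ is the maximum absolute value of the entries of $\vec b$. *)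

From HB Require Import structures.
From mathcomp Require Import all_boot all_order all_algebra.
Set Implicit Arguments. Unset Strict Implicit. Unset Printing Implicit Defensive.
Import Order.TTheory GRing.Theory Num.Theory.
Local Open Scope ring_scope.

Record linpoly (d : nat) := LinPoly { lcoef : 'I_d -> int ; lconst : int }.

Definition lp_eval (d : nat) (f : linpoly d) (b : 'I_d -> int) : int :=
  \sum_(j < d) lcoef f j * b j + lconst f.

Definition lp_nonzero (d : nat) (f : linpoly d) : Prop :=
  (exists j, lcoef f j != 0) \/ lconst f != 0.

(* p-adic valuation of a nonzero integer (v_p(0) = oo is handled separately) *)
Definition vp (p : nat) (x : int) : nat := logn p `|x|%N.

(* v_p(x) <= v_p(y), with the convention v_p(0) = oo *)
Definition vp_le (p : nat) (x y : int) : Prop :=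
  y = 0 \/ (x != 0 /\ (vp p x <= vp p y)%N).

Definition sol_mod (d m : nat) (f g : 'I_m -> linpoly d) (p : nat)
    (b : 'I_d -> int) : Prop :=
  forall i : 'I_m, lp_eval (f i) b != 0 /\ vp_le p (lp_eval (f i) b) (lp_eval (g i) b).

Definition in_PPhi (d m : nat) (f : 'I_m -> linpoly d) (p : nat) : Prop :=
  (p <= m)%N \/
  exists i : 'I_m,
    (exists j, lcoef (f i) j != 0 /\ (p %| `|lcoef (f i) j|)%N) \/
    (lconst (f i) != 0 /\ (p %| `|lconst (f i)|)%N).

From mathcomp Require Import all_boot all_order all_algebra intdiv.
Set Implicit Arguments. Unset Strict Implicit. Unset Printing Implicit Defensive.
Import Order.TTheory GRing.Theory Num.Theory.
Local Open Scope ring_scope.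

(* The solution is built coordinate by coordinate, all values taken in
   [0, p).  After the coordinates j < k have been fixed, each left-hand side
   f_i must stay "alive": either some coefficient a_ij with j >= k is a unit
   mod p, or the partial value  c_i + sum_(j<k) a_ij b_j  is already a unit
   mod p.  Initially (k = 0) this holds because p is outside P(Phi) and every
   f_i is nonzero.  To fix coordinate k, note that for each f_i with a_ik a
   unit mod p there is at most one residue t < p making the new partial value
   divisible by p (a linear congruence has one root); every other value keeps
   f_i alive.  Since m < p, a pigeonhole argument yields a t avoiding the at
   most m forbidden residues.  At k = d every f_i(b) is a unit mod p, i.e.
   f_i(b) != 0 and v_p(f_i(b)) = 0, which makes b a solution modulo p.
   The file proves: uniqueness of roots of linear congruences, the pigeonhole
   step, the algebra of partial evaluations, the invariant and its
   propagation, and finally the theorem. *)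

Lemma linear_root_unique (p : nat) (a s : int) (t1 t2 : nat) :
  prime p -> ~~ (p%:Z %| a)%Z -> (t1 < p)%N -> (t2 < p)%N ->
  (p%:Z %| s + a * t1%:Z)%Z -> (p%:Z %| s + a * t2%:Z)%Z -> t1 = t2.
Proof.
move=> p_pr p_ndvd_a t1_lt t2_lt root1 root2.
have p_coprime_a : coprimez p%:Z a by rewrite coprimezE prime_coprime.
have : (p%:Z %| a * (t1%:Z - t2%:Z))%Z.
  have -> : a * (t1%:Z - t2%:Z) = (s + a * t1%:Z) - (s + a * t2%:Z).
    by rewrite mulrBr opprD addrACA subrr add0r.
  exact: rpredB.
rewrite (Gauss_dvdzr _ p_coprime_a) -eqz_mod_dvd.
by rewrite !modz_nat !modn_small // => /eqP [].
Qed.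

Lemma avoid_unique_roots (m p : nat) (bad : 'I_m -> 'I_p -> bool) :
  (m < p)%N -> (forall i t1 t2, bad i t1 -> bad i t2 -> t1 = t2) ->
  exists t : 'I_p, forall i, ~~ bad i t.
Proof.
case: m bad => [|m] bad lt_mp bad_uniq; first by exists (Ordinal lt_mp) => -[].
have [t /forallP avoid_t | all_bad] := pickP (fun t => [forall i, ~~ bad i t]).
  by exists t.
pose who (t : 'I_p) := odflt ord0 [pick i | bad i t].
have bad_who t : bad (who t) t.
  rewrite /who; case: pickP => [i //|none].
  by move/negbT: (all_bad t); rewrite negb_forall => /existsP [i]; rewrite none.
have who_inj : injective who.
  by move=> t1 t2 eq_who; apply: (bad_uniq (who t1)); rewrite // eq_who.
by have := leq_card who who_inj; rewrite !card_ord leqNgt lt_mp.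
Qed.

Section PartialEvaluation.
Variables (d : nat) (f : linpoly d).

Definition lp_partial (k : nat) (b : 'I_d -> nat) : int :=
  \sum_(j < d | (j < k)%N) lcoef f j * (b j)%:Z + lconst f.

Definition set_coord (b : 'I_d -> nat) (K : 'I_d) (t : nat) : 'I_d -> nat :=
  fun j => if j == K then t else b j.

Lemma lp_partial0 (b : 'I_d -> nat) : lp_partial 0 b = lconst f.
Proof. by rewrite /lp_partial big_pred0 ?add0r. Qed.

Lemma lp_partial_full (b : 'I_d -> nat) :
  lp_partial d b = lp_eval f (fun j => (b j)%:Z).
Proof.
by rewrite /lp_partial /lp_eval; congr (_ + _); apply: eq_bigl => j; rewrite ltn_ord.
Qed.

Lemma lp_partial_set (b : 'I_d -> nat) (K : 'I_d) (t : nat) :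
  lp_partial K.+1 (set_coord b K t) = lp_partial K b + lcoef f K * t%:Z.
Proof.
rewrite /lp_partial (bigD1 K) //= /set_coord eqxx [RHS]addrAC [in RHS](addrC _ (_ * _)).
congr (_ + _ + _).
apply: eq_big => [j | j /andP [_ j_neq_K]]; last by rewrite ifN.
by rewrite ltnS leq_eqVlt -(inj_eq val_inj) /=; case: ltngtP.
Qed.

End PartialEvaluation.

Section Invariant.
Variables (p d : nat) (f : linpoly d).

Definition alive (k : nat) (b : 'I_d -> nat) : Prop :=
  (exists j : 'I_d, (k <= j)%N /\ ~~ (p%:Z %| lcoef f j)%Z)
  \/ ~~ (p%:Z %| lp_partial f k b)%Z.

Definition kills (K : 'I_d) (b : 'I_d -> nat) (t : nat) : bool :=
  ~~ (p%:Z %| lcoef f K)%Z && (p%:Z %| lp_partial f K b + lcoef f K * t%:Z)%Z.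

Lemma kills_unique (K : 'I_d) (b : 'I_d -> nat) (t1 t2 : nat) :
  prime p -> (t1 < p)%N -> (t2 < p)%N -> kills K b t1 -> kills K b t2 -> t1 = t2.
Proof.
move=> p_pr t1_lt t2_lt /andP [unit_aK root1] /andP [_ root2].
exact: (linear_root_unique p_pr unit_aK t1_lt t2_lt root1 root2).
Qed.

Lemma alive_set (K : 'I_d) (b : 'I_d -> nat) (t : nat) :
  alive K b -> ~~ kills K b t -> alive K.+1 (set_coord b K t).
Proof.
move=> alive_b; rewrite /kills /alive lp_partial_set.
have [p_dvd_aK /= | unit_aK /= no_root] := boolP (p%:Z %| lcoef f K)%Z; last by right.
move=> _; case: alive_b => [[j [le_Kj unit_aj]] | unit_partial].
  left; exists j; split => //; rewrite ltn_neqAle le_Kj andbT.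
  by apply: contraNneq unit_aj => /val_inj <-.
right; apply: contra unit_partial => p_dvd_new.
by rewrite -(addrK (lcoef f K * t%:Z) (lp_partial f K b)) rpredB // dvdz_mulr.
Qed.

End Invariant.

Section Construction.
Variables (d m p : nat) (f : 'I_m -> linpoly d).
Hypotheses (p_pr : prime p) (lt_mp : (m < p)%N).

Lemma alive_everywhere (k : nat) :
  (forall i, alive p (f i) 0 (fun _ => 0%N)) -> (k <= d)%N ->
  exists b : 'I_d -> nat, (forall j, (b j < p)%N) /\ forall i, alive p (f i) k b.
Proof.
move=> alive0; elim: k => [|k IHk] le_kd.
  by exists (fun _ => 0%N); split => // j; exact: prime_gt0.
have [b [b_lt alive_b]] := IHk (ltnW le_kd).
pose K := Ordinal le_kd.
have [t avoid_t] := avoid_unique_roots (bad := fun i (t : 'I_p) => kills p (f i) K b t)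
  lt_mp (fun i t1 t2 k1 k2 => val_inj (kills_unique p_pr (ltn_ord t1) (ltn_ord t2) k1 k2)).
exists (set_coord b K t); split => [j | i].
  by rewrite /set_coord; case: eqP.
exact: (@alive_set p d (f i) K b t (alive_b i) (avoid_t i)).
Qed.

End Construction.

Lemma alive_start (p d : nat) (f : linpoly d) :
  lp_nonzero f ->
  (forall j, lcoef f j != 0 -> ~~ (p %| `|lcoef f j|)%N) ->
  (lconst f != 0 -> ~~ (p %| `|lconst f|)%N) ->
  alive p f 0 (fun _ => 0%N).
Proof.
move=> [[j nz_aj] | nz_c] unit_coef unit_const.
  by left; exists j; split => //; exact: unit_coef.
by right; rewrite lp_partial0; exact: unit_const.
Qed.

Lemma vp_unit (p : nat) (x : int) : ~~ (p%:Z %| x)%Z -> x != 0 /\ vp p x = 0%N.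
Proof.
move=> p_ndvd_x; split; first by apply: contraNneq p_ndvd_x => ->; exact: dvdz0.
by move: p_ndvd_x; rewrite /vp lognE dvdzE /= => /negbTE ->; rewrite !andbF.
Qed.

Theorem mainTheorem8 (d m : nat) (f g : 'I_m -> linpoly d) (p : nat) :
  (0 < m)%N ->
  (forall i, lp_nonzero (f i)) ->
  prime p ->
  ~ in_PPhi f p ->
  exists b : 'I_d -> nat,
    sol_mod f g p (fun j => (b j)%:Z) /\
    (forall i, vp p (lp_eval (f i) (fun j => (b j)%:Z)) = 0%N) /\
    (forall j, (b j <= p - 1)%N).
Proof.
move=> _ nz_f p_pr notP.
have lt_mp : (m < p)%N by rewrite ltnNge; apply/negP => le_pm; apply: notP; left.
have alive0 i : alive p (f i) 0 (fun _ => 0%N).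
  apply: (alive_start (nz_f i)) => [j nz_aj | nz_c]; apply/negP => p_dvd;
    apply: notP; right; exists i; [by left; exists j | by right].
have [b [b_lt alive_b]] := alive_everywhere p_pr lt_mp alive0 (leqnn d).
have unit_f i : ~~ (p%:Z %| lp_eval (f i) (fun j => (b j)%:Z))%Z.
  rewrite -lp_partial_full; case: (alive_b i) => // -[j [le_dj _]].
  by move: (ltn_ord j); rewrite ltnNge le_dj.
exists b; split; last split.
- move=> i; have [nz_fi vp_fi] := vp_unit (unit_f i).
  by split => //; right; rewrite vp_fi.
- by move=> i; have [_ ->] := vp_unit (unit_f i).
- by move=> j; rewrite leq_subRL ?prime_gt0 // add1n.
Qed.
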